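(* Let $n,k$ be integers with $2\le 2k\le n-4$. Let $\eta=(\eta_1<\dots<\eta_l)\in\overline{\mathbb{D}}^{\,\mathrm{o}}_{2k+2}$, where $\overline{\mathbb{D}}^{\,\mathrm{o}}_{2k+2}=\mathbb{D}^{\,\mathrm{o}}_{2k+2}\setminus\{(1,2k+1)\}$ if $2k=n-4$ and $\overline{\mathbb{D}}^{\,\mathrm{o}}_{2k+2}=\mathbb{D}^{\,\mathrm{o}}_{2k+2}$ otherwise. Let $Y_{\eta^*}$ be the Young diagram whose main diagonal consists of exactly the cells $c_{1,1},\dots,c_{l+1,l+1}$ and which satisfies $h_{1,1}=2n-5$, $h_{i,i}=\eta_{l-(i-2)}$ for $2\le i\le l+1$, and $a(c_{i,i})=l(c_{i,i})$ for $1\le i\le l+1$ (so $Y_{\eta^*}$ is self-conjugate). Let $\lambda$ be the partition associated with $Y_{\eta^*}$ (i.e. $\lambda=\mathbb{N}_0\setminus\mathrm{KN}^{-1}(Y_{\eta^*})$, equivalently the set of hook lengths of the first-column cells of $Y_{\eta^*}$). Then $\lambda$ is unrefinable. In particular $\lambda\in\overline{\mathcal{U}}_{T_{n,n-2k}}$.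
   Context: A partition of $N$ into distinct parts is a sequence $\lambda=(\lambda_1,\dots,\lambda_t)$ of positive integers with $\lambda_1<\dots<\lambda_t$, $\sum\lambda_i=N$ and $t\ge 2$, identified with its set of parts. $\mathbb{D}_N$ is the set of these, and $\mathbb{D}^{\,\mathrm{o}}_N$ the subset with all parts odd. Missing parts: $\mathcal{M}_\lambda=\{1,\dots,\lambda_t\}\setminus\{\lambda_1,\dots,\lambda_t\}$. $\lambda$ is refinable if there are two distinct missing parts $\mu<\mu'$ with $\mu+\mu'\in\lambda$, unrefinable otherwise; $\mathcal{U}_N$ is the set of unrefinable partitions of $N$. An element of $\mathcal{U}_N$ is maximal if its largest part equals the maximum of the largest parts of elements of $\mathcal{U}_N$; $\widetilde{\mathcal{U}}_N$ is the set of these and $\overline{\mathcal{U}}_N=\{\lambda\in\widetilde{\mathcal{U}}_N:\#\mathcal{M}_\lambda=\lfloor\lambda_t/2\rfloor\}$. $T_n=n(n+1)/2$ and $T_{n,d}=T_n-d$. Young diagrams are in English convention: rows $R_1,R_2,\dots$ top to bottom, columns $C_1,C_2,\dots$ left to right, $c_{i,j}$ the cell in row $i$, column $j$; arm $a(c_{i,j})$ = number of cells to its right in its row, leg $l(c_{i,j})$ = number of cells below it in its column, hook length $h_{i,j}=a+l+1$. A numerical set is $S\subseteq\mathbb{N}_0$ with $0\in S$ and finite complement. The Keith–Nath transformation sends $S$ to the Young diagram $\mathrm{KN}(S)$ whose boundary is the lattice path that, starting at the origin, takes for $j=0,1,\dots,\max(\mathbb{N}_0\setminus S)$ an east step if $j\in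 S$ and a north step otherwise; it is a bijection onto Young diagrams, and the hook lengths of the first-column cells of $\mathrm{KN}(S)$ are exactly the elements of $\mathbb{N}_0\setminus S$. *)

From mathcomp Require Import all_boot.
Set Implicit Arguments. Unset Strict Implicit. Unset Printing Implicit Defensive.

Definition distinct_partition (N : nat) (s : seq nat) : bool :=
  [&& sorted ltn s, all (fun x => 0 < x) s, sumn s == N & 2 <= size s].

Definition odd_distinct_partition (N : nat) (s : seq nat) : bool :=
  distinct_partition N s && all odd s.

Definition largest (s : seq nat) : nat := last 0 s.

Definition missing (s : seq nat) : seq nat :=
  [seq m <- iota 1 (largest s) | m \notin s].

Definition refinable (s : seq nat) : bool :=
  has (fun mu => has (fun mu' => (mu < mu') && (mu + mu' \in s)) (missing s))
      (missing s).

Definition unrefinable (s : seq nat) : bool := ~~ refinable s.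

Definition in_U (N : nat) (s : seq nat) : Prop :=
  distinct_partition N s /\ unrefinable s.

Definition in_Utilde (N : nat) (s : seq nat) : Prop :=
  in_U N s /\ forall s', in_U N s' -> largest s' <= largest s.

Definition in_Ubar (N : nat) (s : seq nat) : Prop :=
  in_Utilde N s /\ size (missing s) = (largest s)./2.

Definition T (n : nat) : nat := n * n.+1 %/ 2.
Definition Tnd (n d : nat) : nat := T n - d.

(* Y = [:: |R_1|; |R_2|; ...], nonincreasing positive row lengths *)
Definition young (Y : seq nat) : bool := sorted geq Y && all (fun x => 0 < x) Y.

(* 1-indexed row length of R_i and column length of C_j *)
Definition rowlen (Y : seq nat) (i : nat) : nat := nth 0 Y i.-1.
Definition collen (Y : seq nat) (j : nat) : nat := count (fun x => j <= x) Y.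

Definition in_diagram (Y : seq nat) (i j : nat) : bool :=
  [&& 1 <= i, i <= size Y, 1 <= j & j <= rowlen Y i].

Definition arm (Y : seq nat) (i j : nat) : nat := rowlen Y i - j.
Definition leg (Y : seq nat) (i j : nat) : nat := collen Y j - i.
Definition hook (Y : seq nat) (i j : nat) : nat := arm Y i j + leg Y i j + 1.

(* The partition associated with Y: the set of first-column hook lengths,
   listed increasingly (first-column hooks strictly decrease down the column). *)
Definition assoc_partition (Y : seq nat) : seq nat :=
  rev [seq hook Y i 1 | i <- iota 1 (size Y)].

From mathcomp Require Import all_boot zify.
Set Implicit Arguments. Unset Strict Implicit. Unset Printing Implicit Defensive.

(* Let L = n - 2 and u_i = η_i / 2.  By the complementarity of first-column hooks, the
   partition of the self-conjugate diagram Y_{η*} is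
     λ = {L + a : a ∈ A} ∪ {x ∈ [1, L) : L - 1 - x ∉ A},   A = {L - 1} ∪ {u_i},
   with L parts, largest part 2L - 1 = 2n - 5 and sum T_{n,n-2k}.  Its missing parts
   below L are the L - 1 - u_i; since Σ u_i ≤ k and 2k ≤ L - 2, two missing parts can
   only add up to a part of λ when L - 2 = 2u + v with u = k, v = 0, i.e. η = (1, 2k+1)
   and 2k = n - 4, the excluded case.
   Maximality: an unrefinable partition with largest part m contains j or m - j for all
   0 < j < m/2, so its sum is at least m + C(⌈m/2⌉, 2); this exceeds T_{n,n-2k} when
   m ≥ 2n - 3, and for m = 2n - 4 the sum is either too large or of the wrong parity. *)

Lemma bin2S n : 'C(n.+1, 2) = 'C(n, 2) + n.
Proof. by rewrite binS bin1. Qed.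

Lemma T_bin2 n : T n = 'C(n.+1, 2).
Proof. by rewrite /T bin2 -divn2 mulnC. Qed.

Lemma leq_sumn_subset (s t : seq nat) :
  uniq s -> uniq t -> {subset t <= s} -> sumn t <= sumn s.
Proof.
move=> us ut ts; rewrite -(perm_sumn (permEl (perm_filterC (mem t) s))) sumn_cat.
suff /perm_sumn <- : perm_eq [seq x <- s | x \in t] t by apply: leq_addr.
apply: uniq_perm; rewrite ?filter_uniq // => x; rewrite mem_filter.
by apply/andP/idP => [[]|xt] //; split; last apply: ts.
Qed.

Lemma leq_sumn_mem (s : seq nat) x : x \in s -> x <= sumn s.
Proof. by elim: s => //= a s IH /[!inE] /orP[/eqP-> | /IH]; lia. Qed.

Lemma sumn_uniq_iota (s : seq nat) b :
  uniq s -> all (fun x => x < b) s -> sumn s = \sum_(0 <= x < b) (x \in s) * x.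
Proof.
move=> us /allP sb; transitivity (\sum_(x <- [seq x <- index_iota 0 b | x \in s]) x).
  rewrite sumnE; apply/perm_big/uniq_perm; rewrite ?filter_uniq ?iota_uniq // => x.
  rewrite mem_filter mem_index_iota; apply/idP/andP => [xs|[]] //.
  by rewrite leq0n sb.
by rewrite big_filter big_mkcond; apply: eq_bigr => x _; case: (x \in s); rewrite ?mul1n.
Qed.

Lemma leq_largest (s : seq nat) x : sorted ltn s -> x \in s -> x <= largest s.
Proof.
case: s => // a s; rewrite /largest /=.
elim: s a x => [|b s IH] a x /=; first by move=> _; rewrite inE => /eqP->.
case/andP=> ab sb; rewrite inE => /orP[/eqP->|]; last exact: IH.
exact: leq_trans (ltnW ab) (IH b b sb (mem_head _ _)).
Qed.

Lemma largest_mem (s : seq nat) : 0 < size s -> largest s \in s.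
Proof. by case: s => // a s _; apply: mem_last. Qed.

Lemma size_missing (s : seq nat) :
  sorted ltn s -> all (fun x => 0 < x) s -> size (missing s) = largest s - size s.
Proof.
move=> ss /allP spos; have us := sorted_uniq ltn_trans ltnn ss.
rewrite /missing size_filter.
have cs : count (mem s) (iota 1 (largest s)) = size s.
  rewrite -size_filter; apply/perm_size/uniq_perm; rewrite ?filter_uniq ?iota_uniq // => x.
  rewrite mem_filter mem_iota; apply/andP/idP => [[]|xs] //.
  by rewrite spos // add1n ltnS leq_largest.
have := count_predC (mem s) (iota 1 (largest s)); rewrite size_iota cs => E.
by rewrite -[in RHS]E addKn.
Qed.

(** * Sums of unrefinable partitions *)

Lemma unrefinable_mem_or (s : seq nat) j :
  unrefinable s -> largest s \in s -> 0 < j -> j.*2 < largest s ->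
  (j \in s) || (largest s - j \in s).
Proof.
move=> /negP ur ms j0 jm; apply/negPn/negP => /norP[js mjs]; apply: ur.
apply/hasP; exists j; first by rewrite mem_filter js mem_iota; lia.
apply/hasP; exists (largest s - j); first by rewrite mem_filter mjs mem_iota; lia.
by rewrite subnKC ?ms ?andbT; lia.
Qed.

Section BandSum.

Variables (s : seq nat) (m : nat).

Definition band_sum (j : nat) : nat := \sum_(j <= x < (m - j).+1) (x \in s) * x.

Hypothesis cover : forall j, 0 < j -> j.*2 < m -> (j \in s) || (m - j \in s).

Lemma band_sumS j : j.*2 < m ->
  band_sum j = (j \in s) * j + (m - j \in s) * (m - j) + band_sum j.+1.
Proof.
move=> jm; rewrite /band_sum big_ltn; last lia.
have -> : (m - j).+1 = (m - j.+1).+2 by lia.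
rewrite big_nat_recr /=; last lia.
have -> : (m - j.+1).+1 = m - j by lia.
lia.
Qed.

Lemma band_sum_ge j : 0 < j -> 'C((m.+1)./2, 2) <= 'C(j, 2) + band_sum j.
Proof.
have [d] := ubnP ((m.+1)./2 - j); elim: d j => // d IH j jd j0.
case: (ltnP j.*2 m) => jm; last by apply: leq_trans (leq_addr _ _); apply: leq_bin2l; lia.
have := IH j.+1 ltac:(lia) isT; rewrite [band_sum j]band_sumS // bin2S.
by have := cover j0 jm; case: (j \in s); case: (m - j \in s) => //= _; lia.
Qed.

(* When m = 2p each pair {j, 2p - j} contributes j plus an even excess, unless it is
   complete, which costs at least p more; so does the middle part p. *)
Lemma band_sum_double p j : m = p.*2 -> 0 < j -> j <= p ->
  'C(p, 2) + p <= 'C(j, 2) + band_sum j \/ exists e, 'C(j, 2) + band_sum j = 'C(p, 2) + e.*2.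
Proof.
move=> mp; have [d] := ubnP (p - j); elim: d j => // d IH j jd j0 jp.
case: (ltnP j p) => jp'; last first.
  have -> : j = p by lia.
  rewrite /band_sum mp (_ : p.*2 - p = p) ?big_nat1; last lia.
  by case: (p \in s); [left | right; exists 0] => /=; lia.
have ge := band_sum_ge (isT : 0 < j.+1).
rewrite (_ : (m.+1)./2 = p) in ge; last by rewrite mp -uphalfE uphalf_double.
have jm : j.*2 < m by lia.
have := IH j.+1 ltac:(lia) isT jp'; rewrite [band_sum j]band_sumS // bin2S.
have := cover j0 jm; rewrite mp in ge *.
case: (j \in s); case: (p.*2 - j \in s) => //= _ [A | [e B]]; try by left; lia.
- by right; exists e; lia.
- by right; exists (e + (p - j)); lia.
Qed.

End BandSum.

Lemma sumn_band_sum (s : seq nat) : sorted ltn s -> all (fun x => 0 < x) s -> 0 < size s ->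
  sumn s = largest s + band_sum s (largest s) 1.
Proof.
move=> ss /allP spos s0; set m := largest s.
have ms : m \in s := largest_mem s0.
have m0 : 0 < m := spos m ms.
rewrite (@sumn_uniq_iota _ m.+1) ?(sorted_uniq ltn_trans ltnn) //; last first.
  by apply/allP => x xs; rewrite ltnS leq_largest.
rewrite big_ltn // big_nat_recr //= ms /band_sum subn1 prednK // muln0 mul1n.
by rewrite add0n addnC.
Qed.

Lemma in_U_largest_le n k s : 2 <= 2 * k -> 2 * k <= n - 4 ->
  in_U (Tnd n (n - 2 * k)) s -> largest s <= 2 * n - 5.
Proof.
move=> k1 kn [/and4P[ss spos /eqP sN s2] ur]; set m := largest s.
have s0 : 0 < size s by lia.
have cover j : 0 < j -> j.*2 < m -> (j \in s) || (m - j \in s).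
  exact: unrefinable_mem_or ur (largest_mem s0).
have := sumn_band_sum ss spos s0; rewrite sN /Tnd T_bin2 -/m => sE.
have Cn : 'C(n.+1, 2) = 'C(n - 2, 2) + (n - 2) + (n - 1) + n.
  by rewrite (_ : n.+1 = (n - 2).+3) ?bin2S; lia.
have C12 : 'C(1, 2) = 0 by [].
case: (leqP m (2 * n - 5)) => // big; case: (leqP (2 * n - 3) m) => hm.
  have := band_sum_ge cover (isT : 0 < 1).
  have : 'C(n - 2, 2) + (n - 2) <= 'C(m.+1./2, 2) by rewrite -bin2S; apply: leq_bin2l; lia.
  lia.
have [A | [e B]] := band_sum_double cover (p := n - 2) (j := 1) ltac:(lia) isT ltac:(lia); lia.
Qed.

(** * Hook sets of self-conjugate diagrams *)

(* The first-column hook lengths of a self-conjugate diagram with L rows whose diagonal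
   cells have arm lengths A (Frobenius coordinates (A | A)). *)
Definition selfconj_hooks (L : nat) (A : seq nat) : seq nat :=
  [seq x <- iota 0 L.*2 | if L <= x then x - L \in A else L.-1 - x \notin A].

Lemma eq_selfconj_hooks L A B : A =i B -> selfconj_hooks L A = selfconj_hooks L B.
Proof. by move=> AB; apply: eq_filter => x; rewrite !AB. Qed.

Lemma sorted_selfconj_hooks L A : sorted ltn (selfconj_hooks L A).
Proof. exact/sorted_filter/iota_ltn_sorted/ltn_trans. Qed.

Section SelfconjHooks.

Variables (L : nat) (A : seq nat).
Hypothesis A_lt : forall a, a \in A -> a < L.

Lemma mem_selfconj_hooks x :
  (x \in selfconj_hooks L A) = if L <= x then x - L \in A else L.-1 - x \notin A.
Proof.
rewrite mem_filter mem_iota add0n; case: (leqP L x) => Lx; apply/andP/idP => [[]//|xA].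
  by split=> //; have := A_lt xA; lia.
by split=> //; lia.
Qed.

Hypothesis A_uniq : uniq A.

Lemma perm_iota_selfconj :
  perm_eq (iota 0 L) ([seq x <- iota 0 L | L.-1 - x \notin A] ++ [seq L.-1 - a | a <- A]).
Proof.
rewrite -(perm_filterC (fun x => L.-1 - x \notin A)) perm_cat2l.
apply: uniq_perm; rewrite ?filter_uniq ?iota_uniq //.
  rewrite map_inj_in_uniq // => a b /A_lt aL /A_lt bL; lia.
move=> x; rewrite mem_filter mem_iota /= negbK; apply/andP/mapP => [[xA xL]|[a aA ->]].
  by exists (L.-1 - x) => //; lia.
by have aL := A_lt aA; rewrite subKn; [split=> //; lia | lia].
Qed.

Lemma perm_selfconj_hooks :
  perm_eq (selfconj_hooks L A)
          ([seq x <- iota 0 L | L.-1 - x \notin A] ++ [seq L + a | a <- A]).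
Proof.
rewrite /selfconj_hooks -addnn iotaD filter_cat add0n.
rewrite (@eq_in_filter _ _ (fun x => L.-1 - x \notin A) (iota 0 L)); last first.
  by move=> x; rewrite mem_iota add0n => /andP[_ xL]; rewrite leqNgt xL.
rewrite perm_cat2l; apply: uniq_perm; rewrite ?filter_uniq ?iota_uniq ?map_inj_uniq //.
  exact: addnI.
move=> x; rewrite mem_filter mem_iota; apply/andP/mapP => [[xA /andP[Lx xL]]|[a aA ->]].
  by rewrite Lx in xA; exists (x - L) => //; lia.
by rewrite leq_addr addKn aA; split=> //; have := A_lt aA; lia.
Qed.

Lemma size_selfconj_hooks : size (selfconj_hooks L A) = L.
Proof.
rewrite (perm_size perm_selfconj_hooks) -[RHS](size_iota 0).
by rewrite (perm_size perm_iota_selfconj) !size_cat !size_map.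
Qed.

Lemma sumn_selfconj_hooks :
  sumn (selfconj_hooks L A) = 'C(L, 2) + \sum_(a <- A) a.*2.+1.
Proof.
have := perm_sumn perm_iota_selfconj; have := perm_sumn perm_selfconj_hooks.
rewrite !sumn_cat !sumnE !big_map -bin2_sum /index_iota subn0.
have -> : \sum_(a <- A) (L + a) = \sum_(a <- A) (L.-1 - a) + \sum_(a <- A) a.*2.+1.
  by rewrite -big_split; apply: eq_big_seq => a /A_lt /=; lia.
by move=> -> ->; rewrite addnA.
Qed.

End SelfconjHooks.

Lemma largest_selfconj_hooks L (A : seq nat) :
  (forall a, a \in A -> a < L) -> L.-1 \in A -> largest (selfconj_hooks L A) = L.*2.-1.
Proof.
move=> A_lt A_top; have L0 : 0 < L by have := A_lt _ A_top; lia.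
have top : L.*2.-1 \in selfconj_hooks L A.
  rewrite mem_selfconj_hooks // (_ : L <= L.*2.-1); last lia.
  by rewrite (_ : L.*2.-1 - L = L.-1) //; lia.
have /(largest_mem (s := selfconj_hooks L A)) : 0 < size (selfconj_hooks L A).
  by case: (selfconj_hooks L A) top.
rewrite mem_filter mem_iota => /andP[_ lt2L].
by apply/eqP; rewrite eqn_leq leq_largest ?sorted_selfconj_hooks // andbT; lia.
Qed.

Lemma selfconj_hooks_gt0 L (A : seq nat) :
  (forall a, a \in A -> a < L) -> L.-1 \in A -> all (fun x => 0 < x) (selfconj_hooks L A).
Proof.
move=> A_lt A_top; apply/allP => x; rewrite mem_selfconj_hooks //; case: (leqP L x) => Lx.
  by have := A_lt _ A_top; lia.
by case: x Lx => // _; rewrite subn0 A_top.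
Qed.

Section UnrefinableSelfconj.

Variables (L k : nat) (U : seq nat).
Hypotheses (U_uniq : uniq U) (U_sum : sumn U <= k) (k_gt0 : 0 < k) (k_L : k.*2.+2 <= L).
Hypothesis U_exception : L = k.*2.+2 -> 0 \in U -> k \notin U.

Let sumn_sub t : uniq t -> {subset t <= U} -> sumn t <= k.
Proof. by move=> ut tU; apply: leq_trans (leq_sumn_subset U_uniq ut tU) U_sum. Qed.

Let U_le u : u \in U -> u <= k.
Proof. by move/leq_sumn_mem/leq_trans; apply. Qed.

Let U_pair u v : u \in U -> v \in U -> u != v -> u + v <= k.
Proof.
move=> uU vU uv; have := @sumn_sub [:: u; v]; rewrite /= addn0 inE uv; apply=> //.
by move=> x /[!inE] /orP[] /eqP->.
Qed.

Let U_triple u v w : u \in U -> v \in U -> w \in U -> u != v -> u != w -> v != w ->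
  u + v + w <= k.
Proof.
move=> uU vU wU uv uw vw; have := @sumn_sub [:: u; v; w].
rewrite /= addn0 addnA !inE negb_or uv uw vw; apply=> //.
by move=> x /[!inE] /or3P[] /eqP->.
Qed.

Let A_lt a : a \in L.-1 :: U -> a < L.
Proof. by rewrite inE => /orP[/eqP-> | /U_le]; lia. Qed.

Let missing_lt_L x : 0 < x < L -> x \notin selfconj_hooks L (L.-1 :: U) ->
  exists2 u, u \in U & x = L.-1 - u.
Proof.
move=> /andP[x0 xL]; rewrite mem_selfconj_hooks // leqNgt xL negbK inE.
by case/orP=> [/eqP | xU]; [lia | exists (L.-1 - x) => //; lia].
Qed.

Let double_sum_neq u v : u \in U -> v \in U -> u != v -> u.*2 + v != L - 2.
Proof.
move=> uU vU uv; apply/eqP => uvL; have u_k := U_le uU; have uv_k := U_pair uU vU uv.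
have v0 : v = 0 by lia.
have uk : u = k by lia.
rewrite v0 in vU; rewrite uk in uU.
by rewrite (negbTE (U_exception ltac:(lia) vU)) in uU.
Qed.

Lemma unrefinable_selfconj_hooks : unrefinable (selfconj_hooks L (L.-1 :: U)).
Proof.
have top := largest_selfconj_hooks A_lt (mem_head _ _).
apply/hasPn => mu; rewrite mem_filter mem_iota top => /andP[mu_out /andP[mu0 mu_top]].
apply/hasPn => nu; rewrite mem_filter mem_iota top => /andP[nu_out /andP[nu0 nu_top]].
apply/negP => /andP[mu_nu]; rewrite mem_selfconj_hooks //.
case: (ltnP nu L) => nuL.
  have [u uU mu_u] := missing_lt_L (ltac:(lia) : 0 < mu < L) mu_out.
  have [v vU nu_v] := missing_lt_L (ltac:(lia) : 0 < nu < L) nu_out.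
  have uv : u != v by apply/eqP; lia.
  have uv_k := U_pair uU vU uv; case: (leqP L (mu + nu)) => Lsum; last lia.
  rewrite inE => /orP[/eqP | wU]; first lia.
  set w := mu + nu - L in wU; have w_sum : u + v + w = L - 2 by lia.
  case: (eqVneq u w) => [uw | uw].
    by have /eqP := double_sum_neq uU vU uv; apply; lia.
  case: (eqVneq v w) => [vw | vw].
    by rewrite eq_sym in uv; have /eqP := double_sum_neq vU uU uv; apply; lia.
  by have := U_triple uU vU wU uv uw vw; lia.
move: nu_out; rewrite mem_selfconj_hooks // nuL inE negb_or => /andP[nu_top' nuU].
rewrite (_ : L <= mu + nu); last lia.
rewrite inE => /orP[/eqP w_top | wU].
  have [u uU mu_u] := missing_lt_L (ltac:(lia) : 0 < mu < L) mu_out.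
  by rewrite (_ : nu - L = u) ?uU in nuU; lia.
have w_k := U_le wU; have mu_L : mu < L by lia.
have [u uU mu_u] := missing_lt_L (ltac:(lia) : 0 < mu < L) mu_out.
by have := U_le uU; lia.
Qed.

End UnrefinableSelfconj.

(** * First-column hooks of Young diagrams *)

Lemma sorted_map_iota (r : rel nat) (f : nat -> nat) a n :
  (forall i j, a <= i -> i < j -> j < a + n -> r (f i) (f j)) ->
  sorted r [seq f i | i <- iota a n].
Proof.
move=> fr; apply: (homo_sorted_in (P := mem (iota a n))) (allss _) (iota_ltn_sorted a n).
by move=> i j /[!mem_iota] /andP[ai _] /andP[_ jn] ij; apply: fr.
Qed.

Section YoungDiagram.

Variable Y : seq nat.
Hypothesis Y_young : young Y.

Let geq_trans : transitive geq.
Proof. by move=> a b c ba cb; apply: leq_trans cb ba. Qed.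

Lemma rowlen_gt0 i : 0 < i <= size Y -> 0 < rowlen Y i.
Proof.
case/andP: Y_young => _ /allP Ypos /andP[i0 iY].
by apply/Ypos/mem_nth; rewrite prednK.
Qed.

Lemma leq_rowlen i j : i <= j -> rowlen Y j <= rowlen Y i.
Proof.
case/andP: Y_young => Ysorted _ ij; rewrite /rowlen.
case: (ltnP j.-1 (size Y)) => jY; last by rewrite nth_default.
by apply: (sorted_leq_nth geq_trans leqnn) => //; rewrite ?inE; lia.
Qed.

Lemma collen1 : collen Y 1 = size Y.
Proof. by case/andP: Y_young => _ Ypos; apply/eqP; rewrite -all_count. Qed.

Lemma leq_collen_rowlen i j : 0 < i -> 0 < j -> (i <= collen Y j) = (j <= rowlen Y i).
Proof.
case/andP: Y_young => + _; rewrite /collen /rowlen; case: i => // i Ysorted _ j0 /=.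
elim: Y i Ysorted => [|a s IH] i /=; first by rewrite nth_nil; case: j j0.
move=> a_s; have s_sorted := path_sorted a_s.
have /allP s_le_a := order_path_min geq_trans a_s.
case: (leqP j a) => [ja | aj] /=.
  by case: i => [|i] //=; rewrite add1n ltnS IH.
rewrite (@eq_in_count _ _ pred0) ?count_pred0; last by move=> x /s_le_a /=; lia.
apply/esym/negbTE; rewrite -ltnNge; case: i => [|i] //=.
case: (ltnP i (size s)) => [i_s | s_i]; last by rewrite nth_default.
by have /= := s_le_a _ (mem_nth 0 i_s); lia.
Qed.

Lemma collen_le_size j : collen Y j <= size Y.
Proof. exact: count_size. Qed.

Lemma leq_collen i j : i <= j -> collen Y j <= collen Y i.
Proof. by move=> ij; apply: sub_count => x /= /(leq_trans ij). Qed.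

Lemma rowlen_collen_neq i j : 0 < i -> 0 < j -> rowlen Y i + collen Y j != (i + j).-1.
Proof.
move=> i0 j0; apply/eqP; case: (leqP j (rowlen Y i)) => ji.
  by have := ji; rewrite -leq_collen_rowlen //; lia.
by have := ji; rewrite ltnNge -leq_collen_rowlen // -ltnNge; lia.
Qed.

Lemma hook_col1 i : 0 < i <= size Y -> hook Y i 1 = rowlen Y i + size Y - i.
Proof. by move=> iY; have := rowlen_gt0 iY; rewrite /hook /arm /leg collen1; lia. Qed.

Lemma sorted_assoc_partition : sorted ltn (assoc_partition Y).
Proof.
rewrite rev_sorted; apply: sorted_map_iota => i j i0 ij jY.
by rewrite !hook_col1 ?i0 ?(ltnW i0) /=; [have := leq_rowlen (ltnW ij) | lia | lia]; lia.
Qed.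

(* Macdonald I.(1.7): the first-column hooks {λ_i + L - i} and the numbers
   {L - 1 + j - λ'_j} are complementary in [0, L + λ_1). *)
Lemma mem_assoc_partition x :
  (x \in assoc_partition Y) = (x < size Y + rowlen Y 1) &&
    (x \notin [seq (size Y).-1 + j - collen Y j | j <- iota 1 (rowlen Y 1)]).
Proof.
set L := size Y; set M := rowlen Y 1; set C := [seq _ | j <- _].
set H := [seq rowlen Y i + L - i | i <- iota 1 L].
have eH : [seq hook Y i 1 | i <- iota 1 L] = H.
  by apply/eq_in_map => i /[!mem_iota] iL; rewrite hook_col1 //; lia.
have uH : uniq H.
  by rewrite -eH -rev_uniq; have := sorted_uniq ltn_trans ltnn sorted_assoc_partition.
have uC : uniq C.
  apply: (sorted_uniq ltn_trans ltnn); apply: sorted_map_iota => i j i0 ij jM.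
  by have := leq_collen (ltnW ij); have := collen_le_size i; lia.
have H_lt y : y \in H -> y < L + M.
  by case/mapP => i /[!mem_iota] iL ->; have := leq_rowlen (_ : 1 <= i); lia.
have C_lt y : y \in C -> y < L + M.
  case/mapP => j /[!mem_iota] jM ->.
  suff : 0 < L by lia.
  by move: jM; rewrite /M /L /rowlen; case: (Y) => /= [|? ?]; lia.
have H_notin_C y : y \in H -> y \notin C.
  case/mapP => i /[!mem_iota] iL ->; apply/mapP => -[j /[!mem_iota] jM].
  by have /eqP := @rowlen_collen_neq i j ltac:(lia) ltac:(lia); have := collen_le_size j; lia.
have [_ HC_iota] : (size (H ++ C) = size (iota 0 (L + M))) * (H ++ C =i iota 0 (L + M)).
  apply: uniq_min_size; last by rewrite size_cat !size_map !size_iota.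
    rewrite cat_uniq uH uC andbT; apply/hasPn => y yC.
    by apply/negP => /H_notin_C; rewrite yC.
  by move=> y; rewrite mem_cat mem_iota => /orP[/H_lt | /C_lt]; lia.
rewrite /assoc_partition mem_rev eH; case xH: (x \in H); first by rewrite H_lt ?H_notin_C.
case xLM: (x < L + M) => //=; have : x \in iota 0 (L + M) by rewrite mem_iota.
by rewrite -HC_iota mem_cat xH /= => ->.
Qed.

Section DurfeeSquare.

Variable D : nat.
Hypotheses (D_gt0 : 0 < D) (D_diag : D <= rowlen Y D) (D_durfee : rowlen Y D.+1 <= D).
Hypothesis diag_sym : forall j, 0 < j <= D -> arm Y j j = leg Y j j.

Let on_diag j : 0 < j -> (j <= rowlen Y j) = (j <= D).
Proof.
move=> j0; apply/idP/idP => [jj | jD]; last by have := leq_rowlen jD; lia.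
by rewrite leqNgt; apply/negP => Dj; have := leq_rowlen Dj; lia.
Qed.

Let rowlen_collen_diag j : 0 < j <= D -> rowlen Y j = collen Y j.
Proof.
move=> /andP[j0 jD]; have jr : j <= rowlen Y j by rewrite on_diag.
have jc : j <= collen Y j by rewrite leq_collen_rowlen.
by have := diag_sym (ltac:(lia) : 0 < j <= D); rewrite /arm /leg; lia.
Qed.

Let arm_diag_lt j : 0 < j <= D -> arm Y j j < size Y.
Proof.
move=> /andP[j0 jD]; have jc : j <= collen Y j by rewrite leq_collen_rowlen // on_diag.
by have := collen_le_size j; rewrite /arm rowlen_collen_diag ?j0 //; lia.
Qed.

Lemma assoc_partition_selfconj :
  assoc_partition Y = selfconj_hooks (size Y) [seq arm Y j j | j <- iota 1 D].
Proof.
apply: (irr_sorted_eq ltn_trans ltnn) sorted_assoc_partition (sorted_selfconj_hooks _ _) _.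
move=> x; rewrite mem_selfconj_hooks; last first.
  by move=> a /mapP[j /[!mem_iota] jD ->]; apply: arm_diag_lt; lia.
have M_L : rowlen Y 1 = size Y by rewrite rowlen_collen_diag ?collen1 ?D_gt0.
have D_L : D <= size Y by have := collen_le_size D; rewrite -rowlen_collen_diag ?D_gt0 //; lia.
case: (leqP (size Y) x) => Lx.
  rewrite /assoc_partition mem_rev; apply/mapP/mapP => [[i /[!mem_iota] iL xi] | [j]].
    subst x; rewrite hook_col1 in Lx *; last lia.
    have iD : i <= D by rewrite -on_diag; lia.
    by exists i; rewrite ?mem_iota /arm; lia.
  rewrite mem_iota /arm => jD xj.
  have jj : j <= rowlen Y j by rewrite on_diag; lia.
  by exists j; rewrite ?mem_iota ?hook_col1; lia.
rewrite mem_assoc_partition M_L (_ : x < _) /=; last lia.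
congr negb; apply/mapP/mapP => [[j /[!mem_iota] jM xj] | [j /[!mem_iota] jD]].
  subst x; have jc := collen_le_size j.
  have jD : j <= D by rewrite -on_diag -?leq_collen_rowlen; lia.
  by exists j; rewrite ?mem_iota /arm ?rowlen_collen_diag; lia.
rewrite /arm => xj; have jj : j <= rowlen Y j by rewrite on_diag; lia.
have rc := rowlen_collen_diag (ltac:(lia) : 0 < j <= D); have jc := collen_le_size j.
exists j; last lia.
by rewrite mem_iota -M_L; have := leq_rowlen (_ : 1 <= j); lia.
Qed.

End DurfeeSquare.

End YoungDiagram.

(** * The diagram Y_{eta*} *)

Lemma sum_double_succ (s : seq nat) : \sum_(u <- s) u.*2.+1 = (sumn s).*2 + size s.
Proof. by elim: s => [|a s IH]; rewrite ?big_nil ?big_cons //= IH doubleD; lia. Qed.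

Lemma sum_double_succ_half (s : seq nat) : all odd s -> \sum_(u <- map half s) u.*2.+1 = sumn s.
Proof.
move=> /allP s_odd; rewrite big_map sumnE; apply: eq_big_seq => a /s_odd oa.
by have := odd_double_half a; rewrite oa; lia.
Qed.

Lemma uniq_map_half (s : seq nat) : uniq s -> all odd s -> uniq (map half s).
Proof.
move=> us /allP s_odd; rewrite map_inj_in_uniq // => a b /s_odd oa /s_odd ob ab.
by have := odd_double_half a; have := odd_double_half b; rewrite oa ob ab; lia.
Qed.

Lemma odd_partition_halves eta k : odd_distinct_partition (k.*2.+2) eta ->
  [/\ uniq (map half eta), \sum_(u <- map half eta) u.*2.+1 = k.*2.+2 &
      sumn (map half eta) <= k].
Proof.
case/andP => /and4P[eta_sorted _ /eqP eta_sum eta_size] eta_odd.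
have eta_uniq := sorted_uniq ltn_trans ltnn eta_sorted.
have U_sum := sum_double_succ_half eta_odd; rewrite eta_sum in U_sum.
split=> //; first exact: uniq_map_half.
by move: U_sum; rewrite sum_double_succ size_map; lia.
Qed.

Lemma odd_partition_halves_0k eta k : odd_distinct_partition (k.*2.+2) eta -> 0 < k ->
  0 \in map half eta -> k \in map half eta -> eta = [:: 1; k.*2.+1].
Proof.
move=> eta_odp k0 U0 Uk; have [U_uniq U_sum _] := odd_partition_halves eta_odp.
have k_sum : k <= sumn (map half eta).
  have := @leq_sumn_subset _ [:: 0; k] U_uniq; rewrite /= add0n addn0; apply.
    by rewrite inE eq_sym -lt0n k0.
  by move=> x /[!inE] /orP[] /eqP->.
rewrite sum_double_succ size_map in U_sum.
case/andP: eta_odp => /and4P[eta_sorted _ _ eta_size] eta_odd.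
have l2 : size eta = 2 by lia.
case: eta l2 eta_sorted eta_odd U0 Uk {U_sum U_uniq k_sum eta_size} => [|a [|b [|? ?]]] //= _.
move=> /andP[ab _] /and3P[oa ob _] /[!inE] U0 Uk.
have := odd_double_half a; have := odd_double_half b; rewrite oa ob => hb ha.
have [a0 bk] : a./2 = 0 /\ b./2 = k.
  by case/orP: U0 => /eqP U0; case/orP: Uk => /eqP Uk; lia.
have -> : a = 1 by lia.
by have -> : b = k.*2.+1 by lia.
Qed.

Lemma diag_arms_eta Y (eta : seq nat) : young Y ->
  (forall i, 1 <= i <= (size eta).+1 -> arm Y i i = leg Y i i) ->
  (forall i, 2 <= i <= (size eta).+1 -> hook Y i i = nth 0 eta ((size eta).+1 - i)) ->
  [seq arm Y j j | j <- iota 1 (size eta).+1] = (size Y).-1 :: rev (map half eta).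
Proof.
move=> Y_young sym hooks /=; congr (_ :: _).
  by rewrite sym // /leg collen1 //; apply: subn1.
apply: (@eq_from_nth _ 0); rewrite ?size_rev ?size_map ?size_iota // => i il.
rewrite nth_rev ?size_map // (nth_map 0) ?size_iota // nth_iota // (nth_map 0); last lia.
have := hooks (2 + i) ltac:(lia); rewrite /hook sym; last lia.
by rewrite (_ : (size eta).+1 - (2 + i) = size eta - i.+1) => [<-|]; lia.
Qed.

Lemma rowlen_not_in_diagram Y d : ~~ in_diagram Y d.+1 d.+1 -> rowlen Y d.+1 <= d.
Proof.
rewrite /in_diagram /=; case: (leqP d.+1 (size Y)) => [dY | Yd] /=.
  by rewrite -leqNgt.
by rewrite /rowlen nth_default.
Qed.

Lemma assoc_partition_eta Y (eta : seq nat) : young Y ->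
  in_diagram Y (size eta).+1 (size eta).+1 -> ~~ in_diagram Y (size eta).+2 (size eta).+2 ->
  (forall i, 2 <= i <= (size eta).+1 -> hook Y i i = nth 0 eta ((size eta).+1 - i)) ->
  (forall i, 1 <= i <= (size eta).+1 -> arm Y i i = leg Y i i) ->
  assoc_partition Y = selfconj_hooks (size Y) ((size Y).-1 :: map half eta).
Proof.
move=> Y_young diag_in diag_out hooks sym.
rewrite (assoc_partition_selfconj Y_young (D := (size eta).+1)) //; last first.
- exact: rowlen_not_in_diagram.
- by case/and4P: diag_in.
by rewrite diag_arms_eta //; apply: eq_selfconj_hooks => x; rewrite !inE mem_rev.
Qed.

Lemma in_Ubar_selfconj_hooks n k U : 2 <= 2 * k -> 2 * k <= n - 4 ->
  uniq U -> \sum_(u <- U) u.*2.+1 = k.*2.+2 -> sumn U <= k ->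
  (n - 2 = k.*2.+2 -> 0 \in U -> k \notin U) ->
  in_Ubar (Tnd n (n - 2 * k)) (selfconj_hooks (n - 2) ((n - 2).-1 :: U)).
Proof.
move=> k1 kn U_uniq U_sum2 U_sum exception.
set A := (n - 2).-1 :: U.
have A_lt a : a \in A -> a < n - 2 by rewrite inE => /orP[/eqP-> | /leq_sumn_mem]; lia.
have A_uniq : uniq A by rewrite cons_uniq U_uniq andbT; apply/negP => /leq_sumn_mem; lia.
have top := largest_selfconj_hooks A_lt (mem_head _ _).
have sch_size := size_selfconj_hooks A_lt A_uniq.
have dp : distinct_partition (Tnd n (n - 2 * k)) (selfconj_hooks (n - 2) A).
  rewrite /distinct_partition sorted_selfconj_hooks selfconj_hooks_gt0 ?mem_head //=.
  rewrite sumn_selfconj_hooks // big_cons U_sum2 sch_size /Tnd T_bin2.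
  by rewrite (_ : n.+1 = (n - 2).+3) ?bin2S; lia.
have ur := @unrefinable_selfconj_hooks (n - 2) k _ U_uniq U_sum ltac:(lia) ltac:(lia) exception.
split; first split; first by split.
  by move=> s' /(in_U_largest_le k1 kn); rewrite top; lia.
rewrite size_missing ?sorted_selfconj_hooks ?selfconj_hooks_gt0 ?mem_head // top sch_size.
lia.
Qed.

Theorem theorem4p15 (n k : nat) (eta Y : seq nat) :
  2 <= 2 * k -> 2 * k <= n - 4 ->
  (* eta \in D-bar^o_{2k+2} *)
  odd_distinct_partition (2 * k + 2) eta ->
  (2 * k = n - 4 -> eta <> [:: 1; 2 * k + 1]) ->
  (* Y = Y_{eta*} *)
  young Y ->
  in_diagram Y (size eta).+1 (size eta).+1 ->
  ~~ in_diagram Y (size eta).+2 (size eta).+2 ->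
  hook Y 1 1 = 2 * n - 5 ->
  (forall i, 2 <= i <= (size eta).+1 ->
     hook Y i i = nth 0 eta ((size eta).+1 - i)) ->
  (forall i, 1 <= i <= (size eta).+1 -> arm Y i i = leg Y i i) ->
  unrefinable (assoc_partition Y) /\
  in_Ubar (Tnd n (n - 2 * k)) (assoc_partition Y).
Proof.
move=> k1 kn eta_odp eta_exc Y_young diag_in diag_out hook11 hooks sym.
have k0 : 0 < k by lia.
have eta_odp' : odd_distinct_partition k.*2.+2 eta by rewrite -addn2 -mul2n.
have [U_uniq U_sum2 U_sum] := odd_partition_halves eta_odp'.
have exception : n - 2 = k.*2.+2 -> 0 \in map half eta -> k \notin map half eta.
  move=> nk U0; apply/negP => Uk; apply: (eta_exc ltac:(lia)).
  by rewrite (odd_partition_halves_0k eta_odp' k0 U0 Uk) mul2n addn1.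
have L_n : size Y = n - 2 by move: hook11; rewrite /hook sym // /leg collen1 //; lia.
rewrite (assoc_partition_eta Y_young diag_in diag_out hooks sym) L_n.
split; last exact: in_Ubar_selfconj_hooks.
exact: (@unrefinable_selfconj_hooks (n - 2) k _ U_uniq U_sum k0 ltac:(lia) exception).
Qed.
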